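(* Let $(A,B)$ be a Katsura pair with $B\in M_N(\{0,1\})$. If the KEP-action $(G_B,E_A)$ is regular, then it is contracting. Moreover, $(G_B,E_A)$ is regular if and only if there is $K\in\mathbb{N}$ such that (i) for $\mu\in E^*_{A,\infty}$, $A_\mu=1$ implies $|\mu|\le K$; and (ii) for $\mu\in E^*_{A,<\infty}$, $|\mu|\ge K$ implies $A_{\mu[K,|\mu|]}=1$.
   Context: Katsura pair: $N\in\mathbb{N}$, $A\in M_N(\mathbb{N})$ (nonnegative integers), $B\in M_N(\mathbb{Z})$ with $A_{ij}=0\Rightarrow B_{ij}=0$. Graph $E_A$: vertices $\{1,\dots,N\}$, edges $e_{i,j,m}$ ($0\le m<A_{ij}$), $r=i$, $s=j$. Finite paths $\mu=\mu_1\cdots\mu_n$ with $s(\mu_i)=r(\mu_{i+1})$, $|\mu|=n$, $\mu[m,n]=\mu_m\cdots\mu_n$. For $\mu=e_{i_0,i_1,r_1}\cdots e_{i_{n-1},i_n,r_n}$, $A_\mu=\prod_tA_{i_ti_{t+1}}$, $B_\mu=\prod_tB_{i_ti_{t+1}}$; $B_e=B_{r(e)s(e)}$. The group bundle $\mathbb{Z}\times E_A^0$ (elements $a_i^k$) acts by $a_i^k\cdot e_{i,j,m}=e_{i,j,\hat m}$, $a_i^k|_{e_{i,j,m}}=a_j^{\hat k}$, $kB_{ij}+m=\hat kA_{ij}+\hat m$, $0\le\hat m<A_{ij}$, extended recursively to paths; $G_B$ is the faithful quotient, $(G_B,E_A)$ the KEP-action, $(G_B)_i$ the isotropy group at $i$.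 $E^0_{A,\infty}=\{i:(G_B)_i\text{ infinite}\}$, $E^0_{A,<\infty}$ its complement; $E_{A,\infty}$ is the subgraph with vertices $E^0_{A,\infty}$ and edges $\{e:s(e)\in E^0_{A,\infty},B_e\ne0\}$; $E_{A,<\infty}$ the subgraph with vertices $E^0_{A,<\infty}$ and edges $\{e:r(e)\in E^0_{A,<\infty},B_e\ne0\}$. Contracting: there is a finite $F\subseteq G_B$ such that for every $g$ there is $n$ with $g|_\mu\in F$ for all $\mu\in d(g)E^k$, $k\ge n$. Regular: for every $g$ there is $K$ such that $g\cdot\mu=\mu$ and $|\mu|\ge K$ imply $g|_\mu$ is the unit at $s(\mu)$. *)

From mathcomp Require Import all_boot all_order all_algebra.
Set Implicit Arguments. Unset Strict Implicit. Unset Printing Implicit Defensive.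
Import GRing.Theory Num.Theory.
Local Open Scope ring_scope.

(* Graph E_A: vertices 'I_N; an edge e_{i,j,m} is the triple (i, j, m),
   with r(e) = i, s(e) = j, and it is an edge iff m < A i j. *)
Definition edge (N : nat) := ('I_N * 'I_N * nat)%type.
Definition erng N (e : edge N) : 'I_N := e.1.1.
Definition esrc N (e : edge N) : 'I_N := e.1.2.
Definition eidx N (e : edge N) : nat := e.2.

Section KEP.
Variables (N : nat) (A : 'M[nat]_N) (B : 'M[int]_N).

Definition is_edge (e : edge N) : bool := (eidx e < A (erng e) (esrc e))%N.

(* [is_path_from v p]: p = mu_1 ... mu_n is a finite path of E_A with r(p) = v,
   i.e. p \in v E^*  (the empty path from v is the vertex v). *)
Fixpoint is_path_from (v : 'I_N) (p : seq (edge N)) : bool :=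
  match p with
  | [::] => true
  | e :: p' => [&& is_edge e, erng e == v & is_path_from (esrc e) p']
  end.

Definition psrc (v : 'I_N) (p : seq (edge N)) : 'I_N := last v (map (@esrc N) p).

Definition Apath (p : seq (edge N)) : nat := \prod_(e <- p) A (erng e) (esrc e).

(* The self-similar action of a_i^k on paths: returns (a_i^k . p, k') where
   a_i^k|_p = a_{s(p)}^{k'}.  One step: k B_ij + m = k' A_ij + m', 0 <= m' < A_ij. *)
Fixpoint kact (k : int) (p : seq (edge N)) : seq (edge N) * int :=
  match p with
  | [::] => ([::], k)
  | e :: p' =>
      let x := k * B (erng e) (esrc e) + (eidx e)%:Z in
      let a := (A (erng e) (esrc e))%:Z in
      let r := kact (x %/ a)%Z p' in
      ((erng e, esrc e, `|(x %% a)%Z|%N) :: r.1, r.2)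
  end.

(* Elements of G_B are represented by pairs (i, k) standing for the class of
   a_i^k in the faithful quotient; two representatives define the same element
   of G_B iff they have the same unit and act identically on all finite paths. *)
Definition GB_eq (g h : 'I_N * int) : Prop :=
  g.1 = h.1 /\ forall p, is_path_from g.1 p -> (kact g.2 p).1 = (kact h.2 p).1.

Definition GB_unit (v : 'I_N) (k : int) : Prop := GB_eq (v, k) (v, 0).

(* The isotropy group (G_B)_i = {[a_i^k] : k in Z} is infinite:
   it is not covered by finitely many classes. *)
Definition isotropy_infinite (i : 'I_N) : Prop :=
  ~ exists s : seq int, forall k : int, exists2 l, l \in s & GB_eq (i, k) (i, l).

Definition path_in_Einf (v : 'I_N) (p : seq (edge N)) : Prop :=
  is_path_from v p /\ isotropy_infinite v /\
  forall e, e \in p -> isotropy_infinite (esrc e) /\ B (erng e) (esrc e) <> 0.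

Definition path_in_Efin (v : 'I_N) (p : seq (edge N)) : Prop :=
  is_path_from v p /\ ~ isotropy_infinite v /\
  forall e, e \in p ->
    [/\ ~ isotropy_infinite (erng e), ~ isotropy_infinite (esrc e)
      & B (erng e) (esrc e) <> 0].

Definition contracting : Prop :=
  exists F : seq ('I_N * int),
    forall (v : 'I_N) (k : int), exists n : nat,
      forall p, is_path_from v p -> (n <= size p)%N ->
        exists2 h, h \in F & GB_eq (psrc v p, (kact k p).2) h.

Definition regular : Prop :=
  forall (v : 'I_N) (k : int), exists K : nat,
    forall p, is_path_from v p -> (kact k p).1 = p -> (K <= size p)%N ->
      GB_unit (psrc v p) (kact k p).2.

(* mu[K, |mu|] = mu_K ... mu_|mu| (1-based), i.e. drop the first K-1 edges. *)
Definition subpath_from (K : nat) (p : seq (edge N)) : seq (edge N) := drop K.-1 p.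

End KEP.

(* With B in {0,1}, an edge with B_e = 0 restricts every a^k to the unit, and along an
   edge with B_e = 1 the restriction a^k' satisfies k + m = k' A_e + m', so |k'| <= |k|,
   strictly when A_e >= 2 and |k| >= 2; on paths avoiding B_e = 0, a^k fixes mu iff A_mu
   divides k.
   Given (i) and (ii): in E_{A,inf} every K+1 consecutive edges contain one with
   A_e >= 2, so a^k restricts to some a^c with |c| <= 1 after (K+1)|k| edges and fixes
   no path of that length; a path that reaches a vertex of finite isotropy stays in
   E_{A,<inf}, and K-1 edges later every continuation has A = 1, so the action there is
   trivial. This gives regularity, and contraction onto {a_u^c : |c| <= 1}.
   Conversely, regularity at a non-unit a_w^k bounds the A = 1 paths of E_{A,inf}
   ending at w, which a^k fixes with restriction a_w^k. At a vertex v of finite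
   isotropy, regularity at the finitely many representatives a_v^l forbids an edge e
   with A_e >= 2 late in E_{A,<inf}: a_v^{A_q} fixes q with restriction a^1, which moves
   the digit 0 of e, while its representative restricts to a unit after q. *)

Set Warnings "-notation-overridden -ambiguous-paths".
From mathcomp Require Import all_boot all_order all_algebra.
From mathcomp Require Import zify.
From Stdlib Require Import Classical.
Set Implicit Arguments. Unset Strict Implicit. Unset Printing Implicit Defensive.
Import GRing.Theory Num.Theory.
Local Open Scope ring_scope.

Lemma absz_divz_shift_le (k m a : int) :
  0 <= m < a -> (`|((k + m) %/ a)%Z| <= `|k|)%N.
Proof.
case/andP=> m_ge0 m_lt_a; have a_gt0 : 0 < a by lia.
have := divz_eq (k + m) a; have := ltz_pmod (k + m) a_gt0.
have := modz_ge0 (k + m) (lt0r_neq0 a_gt0).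
set q := (_ %/ _)%Z; set r := (_ %% _)%Z; nia.
Qed.

Lemma absz_divz_shift_lt (k m a : int) :
  2 <= a -> 0 <= m < a -> (2 <= `|k|)%N -> (`|((k + m) %/ a)%Z| < `|k|)%N.
Proof.
move=> a_ge2 /andP[m_ge0 m_lt_a] k_ge2; have a_gt0 : 0 < a by lia.
have := divz_eq (k + m) a; have := ltz_pmod (k + m) a_gt0.
have := modz_ge0 (k + m) (lt0r_neq0 a_gt0).
set q := (_ %/ _)%Z; set r := (_ %% _)%Z; nia.
Qed.

Lemma exists_bound_seq (T : eqType) (P : T -> nat -> Prop) (s : seq T) :
  (forall x m n, (m <= n)%N -> P x m -> P x n) ->
  (forall x, x \in s -> exists n, P x n) -> exists n, forall x, x \in s -> P x n.
Proof.
move=> P_mono; elim: s => [|x s IH] bound_s; first by exists 0%N.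
have [m Pxm] := bound_s x (mem_head x s).
have [n Psn] : exists n, forall y, y \in s -> P y n.
  by apply: IH => y ys; apply: bound_s; rewrite inE ys orbT.
exists (maxn m n) => y; rewrite inE => /predU1P[->|ys].
  exact: P_mono (leq_maxl m n) Pxm.
exact: P_mono (leq_maxr m n) (Psn y ys).
Qed.

Lemma exists_bound_fin (T : finType) (P : T -> nat -> Prop) :
  (forall x m n, (m <= n)%N -> P x m -> P x n) ->
  (forall x, exists n, P x n) -> exists n, forall x, P x n.
Proof.
move=> P_mono bound.
have [n Pn] := @exists_bound_seq _ P (enum T) P_mono (fun x _ => bound x).
by exists n => x; apply: Pn; rewrite mem_enum.
Qed.

Arguments erng {N} e /.
Arguments esrc {N} e /.
Arguments eidx {N} e /.
Arguments is_edge {N} A e /.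

Section KatsuraAction.
Variables (N : nat) (A : 'M[nat]_N) (B : 'M[int]_N).
Implicit Types (v w : 'I_N) (e : edge N) (p q r : seq (edge N)) (k c l : int).

Local Notation inf := (isotropy_infinite A B).
Local Notation path := (is_path_from A).
Local Notation ka := (kact A B).
Local Notation Apath := (Apath A).
Local Notation Ae e := (A (erng e) (esrc e)).
Local Notation Be e := (B (erng e) (esrc e)).
Local Notation Bnz := (fun e : edge N => Be e != 0).
Local Notation Einf := (path_in_Einf A B).
Local Notation Efin := (path_in_Efin A B).

Lemma is_path_from_cat v p q : path v (p ++ q) = path v p && path (psrc v p) q.
Proof. by elim: p v => [|e p IH] v //=; rewrite IH !andbA. Qed.

Lemma psrc_cat v p q : psrc v (p ++ q) = psrc (psrc v p) q.
Proof. by rewrite /psrc map_cat last_cat. Qed.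

Lemma Apath_nil : Apath [::] = 1%N.
Proof. exact: big_nil. Qed.

Lemma Apath_cons e p : Apath (e :: p) = (Ae e * Apath p)%N.
Proof. exact: big_cons. Qed.

Lemma Apath_cat p q : Apath (p ++ q) = (Apath p * Apath q)%N.
Proof. exact: big_cat. Qed.

Lemma Apath_gt0 v p : path v p -> (0 < Apath p)%N.
Proof.
elim: p v => [|e p IH] v; first by rewrite Apath_nil.
by case/and3P=> e_edge _ /IH; rewrite Apath_cons muln_gt0 (leq_ltn_trans _ e_edge).
Qed.

Lemma kact_cat k p q :
  ka k (p ++ q) = ((ka k p).1 ++ (ka (ka k p).2 q).1, (ka (ka k p).2 q).2).
Proof. by elim: p k => [|e p IH] k /=; [case: (ka k q) | rewrite IH]. Qed.

Lemma size_kact k p : size (ka k p).1 = size p.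
Proof. by elim: p k => [|e p IH] k //=; rewrite IH. Qed.

Lemma kact_cat_fixed k p q :
  (ka k (p ++ q)).1 = p ++ q <-> (ka k p).1 = p /\ (ka (ka k p).2 q).1 = q.
Proof.
rewrite kact_cat; split=> [/eqP|[-> ->]] //.
by rewrite eqseq_cat ?size_kact // => /andP[/eqP-> /eqP->].
Qed.

Lemma kact0 v p : path v p -> ka 0 p = (p, 0).
Proof.
elim: p v => [|[[i j] m] p IH] v //= /and3P[/= m_lt _ /IH IHp].
by rewrite mul0r add0r modz_small ?divz_small ?IHp //; lia.
Qed.

Hypothesis B01 : forall i j, B i j = 0 \/ B i j = 1.

Lemma B_neq0_eq1 i j : B i j != 0 -> B i j = 1.
Proof. by case: (B01 i j) => ->. Qed.

Lemma kact_res_eq0 v p k : path v p -> ~~ all Bnz p -> (ka k p).2 = 0.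
Proof.
elim: p v k => [|[[i j] m] p IH] v k //= /and3P[/= m_lt _ p_path].
rewrite negb_and negbK => /orP[/eqP B0|/(IH _ _ p_path)//].
by rewrite B0 mulr0 add0r divz_small ?(kact0 p_path) //; lia.
Qed.

Lemma kact_res_le v p k : path v p -> (`|(ka k p).2| <= `|k|)%N.
Proof.
elim: p v k => [|[[i j] m] p IH] v k //= /and3P[/= m_lt _ /IH le_res].
apply: leq_trans (le_res _) _.
case: (B01 i j) => ->; rewrite ?mulr0 ?add0r ?mulr1; last first.
  by apply: absz_divz_shift_le; lia.
by rewrite divz_small //; lia.
Qed.

Lemma kact_mulA v p c : path v p -> all Bnz p -> ka ((Apath p)%:Z * c) p = (p, c).
Proof.
elim: p v c => [|[[i j] m] p IH] v c /=; first by rewrite Apath_nil mul1r.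
case/and3P=> /= m_lt _ p_path /andP[/B_neq0_eq1 -> p_Bnz].
have Aij_neq0 : (A i j)%:Z != 0 by lia.
rewrite Apath_cons PoszM mulr1 -mulrA mulrC.
rewrite divzMDl // modzMDl divz_small ?modz_small ?addr0 ?(IH _ _ p_path) //; lia.
Qed.

Lemma kact_fixed_dvd v p k : path v p -> all Bnz p -> (ka k p).1 = p ->
  k = (Apath p)%:Z * (ka k p).2.
Proof.
elim: p v k => [|[[i j] m] p IH] v k /=; first by rewrite Apath_nil mul1r.
case/and3P=> /= m_lt _ p_path /andP[/B_neq0_eq1 -> p_Bnz].
case=> m_fixed /(IH _ _ p_path p_Bnz).
rewrite mulr1 in m_fixed *; rewrite Apath_cons PoszM -mulrA /= => <-.
have := divz_eq (k + m%:Z) (A i j)%:Z; have : (0 <= ((k + m%:Z) %% (A i j)%:Z)%Z).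
  by apply: modz_ge0; lia.
move: m_fixed; set d := (_ %% _)%Z; lia.
Qed.

Definition Apath1_from w := forall p, path w p -> all Bnz p -> Apath p = 1%N.

Lemma kact_id_Apath1 w k p : Apath1_from w -> path w p -> (ka k p).1 = p.
Proof.
elim: p w k => [|[[i j] m] p IH] w k //= A1w /and3P[/= m_lt /eqP iw p_path]; subst w.
case: (B01 i j) => Bij.
  by rewrite Bij mulr0 add0r modz_small ?divz_small ?(kact0 p_path) //; lia.
have A1e q : path j q -> all Bnz q -> (A i j * Apath q)%N = 1%N.
  move=> q_path q_Bnz; rewrite -[A i j]/(Ae (i, j, m)) -Apath_cons.
  by apply: A1w; rewrite /= ?m_lt ?eqxx ?Bij ?q_path ?q_Bnz.
have Aij1 : A i j = 1%N by have := A1e [::] isT isT; rewrite Apath_nil muln1.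
have -> : m = 0%N by lia.
rewrite Bij Aij1 mulr1 addr0 divz1 modz1 (IH j) //.
by move=> q q_path q_Bnz; rewrite -[LHS]mul1n -Aij1 A1e.
Qed.

Lemma unit_of_Apath1 w c : Apath1_from w -> GB_unit A B w c.
Proof.
by move=> A1w; split=> // p p_path; rewrite /= (kact_id_Apath1 _ A1w) ?(kact0 p_path).
Qed.

Lemma finite_isotropy_src e :
  is_edge A e -> Be e != 0 -> ~ inf (erng e) -> ~ inf (esrc e).
Proof.
case: e => [[i j] m] /= m_lt /B_neq0_eq1 Bij fin_i inf_j.
apply: fin_i => -[S coverS]; apply: inf_j.
have e_path : path i [:: (i, j, 0%N)] by rewrite /= eqxx andbT; lia.
have e_Bnz : all Bnz [:: (i, j, 0%N)] by rewrite /= Bij.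
exists [seq (ka l [:: (i, j, 0%N)]).2 | l <- S] => c.
have [l lS [_ eq_l]] := coverS ((A i j)%:Z * c).
exists (ka l [:: (i, j, 0%N)]).2; first exact: map_f.
split=> // t t_path; have := eq_l ([:: (i, j, 0%N)] ++ t).
rewrite is_path_from_cat e_path t_path => /(_ isT).
have := kact_mulA c e_path e_Bnz; rewrite Apath_cons Apath_nil muln1 !kact_cat => ->.
by case.
Qed.

Lemma Einf_psrc v p : Einf v p -> inf (psrc v p).
Proof.
case=> _ [inf_v inf_p]; have := mem_last v (map (@esrc N) p).
by rewrite /psrc inE => /orP[/eqP-> // | /mapP[e /inf_p[inf_s _] ->]].
Qed.

Lemma Einf_cat v p q : Einf v (p ++ q) <-> Einf v p /\ Einf (psrc v p) q.
Proof.
rewrite /path_in_Einf is_path_from_cat; split.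
  case=> /andP[p_path q_path] [inf_v inf_pq].
  have Einf_p : Einf v p.
    by split=> //; split=> // e ep; apply: inf_pq; rewrite mem_cat ep.
  split=> //; split=> //; split; first exact: Einf_psrc Einf_p.
  by move=> e eq; apply: inf_pq; rewrite mem_cat eq orbT.
case=> [[p_path [inf_v inf_p]] [q_path [_ inf_q]]].
split; first by rewrite p_path.
by split=> // e; rewrite mem_cat => /orP[/inf_p|/inf_q].
Qed.

Lemma Einf_Bnz v p : Einf v p -> all Bnz p.
Proof. by case=> _ [_ inf_p]; apply/allP => e /inf_p[_ /eqP]. Qed.

Lemma Efin_of_finite v p : ~ inf v -> path v p -> all Bnz p -> Efin v p.
Proof.
elim: p v => [|e p IH] v fin_v; first by split.
case/and3P=> e_edge /eqP ev p_path /andP[Be_nz p_Bnz].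
have fin_e : ~ inf (erng e) by rewrite ev.
have [_ [fin_s fin_p]] := IH _ (finite_isotropy_src e_edge Be_nz fin_e) p_path p_Bnz.
split; first by apply/and3P; split=> //; apply/eqP.
by split=> // x; rewrite inE => /orP[/eqP-> | /fin_p//]; split=> //; apply/eqP.
Qed.

Lemma Efin_prefix v p q : Efin v (p ++ q) -> Efin v p.
Proof.
case; rewrite is_path_from_cat => /andP[p_path _] [fin_v fin_pq].
by split=> //; split=> // e ep; apply: fin_pq; rewrite mem_cat ep.
Qed.

Lemma finite_vertex_of_not_Einf v p : path v p -> all Bnz p -> ~ Einf v p ->
  exists p1 p2, p = p1 ++ p2 /\ ~ inf (psrc v p1).
Proof.
elim: p v => [|e p IH] v p_path p_Bnz not_Einf.
  by exists [::], [::]; split=> // inf_v; apply: not_Einf.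
case: (classic (inf v)) => [inf_v|]; last by exists [::], (e :: p).
move: p_path p_Bnz => /and3P[e_edge /eqP ev p_path] /andP[Be_nz p_Bnz].
case: (classic (inf (esrc e))) => [inf_s|]; last by exists [:: e], p.
have [Einf_p|p1 [p2 [-> fin]]] := IH _ p_path p_Bnz; last by exists (e :: p1), p2.
case: not_Einf; apply/(Einf_cat v [:: e]); split=> //.
split; first by apply/and3P; split=> //; apply/eqP.
by split=> // x; rewrite inE => /eqP->; split=> //; apply/eqP.
Qed.

Definition small_elements : seq ('I_N * int) :=
  [seq (u, c) | u <- enum 'I_N, c <- [:: -1; 0; 1]].

Lemma mem_small_elements u c : (`|c| <= 1)%N -> (u, c) \in small_elements.
Proof.
move=> c_le1; apply/allpairsP; exists (u, c); rewrite mem_enum; split=> //.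
by case: c c_le1 => [[|[|]]|[|]].
Qed.

Section Bounds.
Variable K : nat.
Hypothesis Einf_A1_bound : forall v p, Einf v p -> Apath p = 1%N -> (size p <= K)%N.

Lemma Einf_split_big_edge v p : (K < size p)%N -> Einf v p ->
  exists q e r, [/\ p = q ++ e :: r, Apath q = 1%N, (2 <= Ae e)%N & (size q <= K)%N].
Proof.
move=> K_lt Einf_p; have size_take : size (take K.+1 p) = K.+1 by rewrite size_takel.
have := Einf_p; rewrite -(cat_take_drop K.+1 p) => /Einf_cat[Einf_take _].
have : has (fun e => Ae e != 1%N) (take K.+1 p).
  apply: contraT => /hasPn A1; suff: (K.+1 <= K)%N by rewrite ltnn.
  rewrite -size_take (Einf_A1_bound Einf_take) // /Apath big1_seq // => e /andP[_ /A1].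
  by rewrite negbK => /eqP.
move=> has_big; move: (cat_take_drop K.+1 p) size_take Einf_take.
case: (split_find has_big) => e q r Ae_neq1; rewrite -all_predC => /allP q_A1.
rewrite -catA cat_rcons => p_eq size_qer _.
have [q_path /= /and3P[e_edge _ _]] : path v q /\ path (psrc v q) (e :: r ++ drop K.+1 p).
  by apply/andP; rewrite -is_path_from_cat p_eq; case: Einf_p.
exists q, e, (r ++ drop K.+1 p); split=> //.
- by rewrite /Apath big1_seq // => x /andP[_ /q_A1/negPn/eqP].
- by move: Ae_neq1 e_edge => /=; lia.
- by move: size_qer; rewrite size_cat size_rcons; lia.
Qed.

Lemma Einf_size_lt v p : Einf v p -> (size p < K.+1 * Apath p)%N.
Proof.
have [n] := ubnP (size p); elim: n v p => // n IH v p /ltnSE size_p Einf_p.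
case: (leqP (size p) K) => [p_short|/Einf_split_big_edge/(_ Einf_p)].
  by have := Apath_gt0 Einf_p.1; nia.
case=> q [e [r [p_eq Aq Ae_ge2 size_q]]]; subst p.
move: Einf_p => /Einf_cat[_ /(Einf_cat _ [:: e])[_ Einf_r]].
have := IH _ _ _ Einf_r; rewrite size_cat /= in size_p *; move=> /(_ ltac:(lia)) IHr.
have : (K.+1 <= K.+1 * Apath r)%N by rewrite leq_pmulr // (Apath_gt0 Einf_r.1).
have : (2 * (K.+1 * Apath r) <= K.+1 * (Ae e * Apath r))%N.
  by rewrite [X in (_ <= X)%N]mulnCA leq_mul.
rewrite Apath_cat Apath_cons Aq mul1n; lia.
Qed.

Lemma Einf_kact_res_le1 v p k : Einf v p -> (K.+1 * `|k| <= size p)%N ->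
  (`|(ka k p).2| <= 1)%N.
Proof.
have [n] := ubnP (size p); elim: n v p k => // n IH v p k /ltnSE size_p Einf_p long_p.
have [k_le1|k_ge2] := leqP `|k| 1; first exact: leq_trans (kact_res_le _ Einf_p.1) k_le1.
have K_lt : (K < size p)%N by move: long_p k_ge2; nia.
have [q [e [r [p_eq Aq Ae_ge2 size_q]]]] := Einf_split_big_edge K_lt Einf_p; subst p.
move: Einf_p => /Einf_cat[Einf_q /(Einf_cat _ [:: e])[Einf_e Einf_r]].
have := kact_mulA k Einf_q.1 (Einf_Bnz Einf_q); rewrite Aq mul1r => kact_q.
have [/and3P[e_edge _ _] /andP[/B_neq0_eq1 Be1 _]] := (Einf_e.1, Einf_Bnz Einf_e).
rewrite kact_cat kact_q /= Be1 mulr1; apply: (IH _ r _ _ Einf_r).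
  by move: size_p; rewrite size_cat /=; lia.
have : (`|((k + (eidx e)%:Z) %/ (Ae e)%:Z)%Z| < `|k|)%N.
  by apply: absz_divz_shift_lt => //; move: e_edge => /=; lia.
rewrite -(leq_pmul2l (ltn0Sn K)) mulnS => lt_k.
by move: long_p; rewrite size_cat /=; lia.
Qed.

Lemma Einf_fixed_size_lt v p k : Einf v p -> (ka k p).1 = p -> k != 0 ->
  (size p < K.+1 * `|k|)%N.
Proof.
move=> Einf_p fixed k_neq0.
have k_eq := kact_fixed_dvd Einf_p.1 (Einf_Bnz Einf_p) fixed.
have res_neq0 : (ka k p).2 != 0 by apply: contraNneq k_neq0 => res0; rewrite k_eq res0 mulr0.
apply: (leq_trans (Einf_size_lt Einf_p)); rewrite leq_mul2l k_eq abszM /=.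
by rewrite leq_pmulr ?absz_gt0 ?orbT.
Qed.

Hypothesis Efin_A1_tail : forall v p, Efin v p -> (K <= size p)%N ->
  Apath (subpath_from K p) = 1%N.

Lemma Apath1_from_finite u p : ~ inf u -> path u p -> all Bnz p -> (K.-1 <= size p)%N ->
  Apath1_from (psrc u p).
Proof.
move=> fin_u p_path p_Bnz size_p [|e s] s_path s_Bnz; first exact: Apath_nil.
have Efin_ps : Efin u (p ++ e :: s).
  by apply: Efin_of_finite; rewrite ?is_path_from_cat ?all_cat ?p_path ?p_Bnz.
have := Efin_A1_tail Efin_ps; rewrite size_cat /= => /(_ ltac:(lia)).
rewrite /subpath_from drop_cat.
case: ltnP => [_|K_ge]; last by have -> : (K.-1 - size p = 0)%N by lia.
by rewrite Apath_cat => /eqP; rewrite muln_eq1 => /andP[_ /eqP].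
Qed.

Lemma Apath1_from_of_not_Einf v q r : path v (q ++ r) -> all Bnz (q ++ r) ->
  ~ Einf v q -> (K.-1 <= size r)%N -> Apath1_from (psrc v (q ++ r)).
Proof.
move=> qr_path qr_Bnz not_Einf size_r.
move: (qr_path) (qr_Bnz); rewrite is_path_from_cat all_cat.
case/andP=> q_path _ /andP[q_Bnz _].
have [q1 [q2 [q_eq fin]]] := finite_vertex_of_not_Einf q_path q_Bnz not_Einf; subst q.
move: qr_path qr_Bnz; rewrite -catA psrc_cat is_path_from_cat all_cat.
case/andP=> _ q2r_path /andP[_ q2r_Bnz].
apply: Apath1_from_finite fin q2r_path q2r_Bnz _.
by rewrite size_cat (leq_trans size_r) ?leq_addl.
Qed.

Lemma regular_of_bounds : regular A B.
Proof.
move=> v k; exists (K.+1 * `|k| + K)%N => p p_path fixed size_p.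
have [p_Bnz|] := boolP (all Bnz p); last by move/(kact_res_eq0 k p_path)->.
have [k0|k_neq0] := eqVneq k 0; first by rewrite k0 (kact0 p_path).
rewrite -(cat_take_drop (K.+1 * `|k|) p) in p_path p_Bnz fixed *.
apply/unit_of_Apath1/Apath1_from_of_not_Einf => // [Einf_take|].
  have [fixed_take _] := (kact_cat_fixed k _ _).1 fixed.
  have := Einf_fixed_size_lt Einf_take fixed_take k_neq0.
  by rewrite size_takel ?ltnn //; lia.
by rewrite size_drop; lia.
Qed.

Lemma contracting_of_bounds : contracting A B.
Proof.
exists small_elements => v k; exists (K.+1 * `|k| + K)%N => p p_path size_p.
suff [res_le1|A1] : (`|(ka k p).2| <= 1)%N \/ Apath1_from (psrc v p).
- by exists (psrc v p, (ka k p).2); [exact: mem_small_elements | split].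
- by exists (psrc v p, 0); [exact: mem_small_elements | exact: unit_of_Apath1].
have [p_Bnz|] := boolP (all Bnz p); last by move/(kact_res_eq0 k p_path)->; left.
rewrite -(cat_take_drop (K.+1 * `|k|) p) in p_path p_Bnz *.
case: (classic (Einf v (take (K.+1 * `|k|) p))) => [Einf_take|not_Einf].
  left; rewrite kact_cat /=.
  move: p_path; rewrite is_path_from_cat => /andP[_ drop_path].
  apply: leq_trans (kact_res_le _ drop_path) _.
  by apply: (Einf_kact_res_le1 Einf_take); rewrite size_takel //; lia.
by right; apply: Apath1_from_of_not_Einf => //; rewrite size_drop; lia.
Qed.

End Bounds.

Lemma nonunit_of_infinite w : inf w -> exists k, ~ GB_unit A B w k.
Proof.
move=> inf_w; apply: NNPP => all_units; apply: inf_w; exists [:: 0] => k.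
by exists 0; rewrite ?mem_head //; apply: NNPP => not_unit; apply: all_units; exists k.
Qed.

Lemma Efin_drop_Apath1 n :
  (forall v q e, Efin v (rcons q e) -> (n <= size q)%N -> Ae e = 1%N) ->
  forall v q r, Efin v (q ++ r) -> (n <= size q)%N -> Apath r = 1%N.
Proof.
move=> last_A1 v q r; elim: r q => [|e r IH] q Efin_qr size_q; first exact: Apath_nil.
rewrite -cat_rcons in Efin_qr.
rewrite Apath_cons (last_A1 v q e (Efin_prefix Efin_qr) size_q) mul1n.
by apply: IH Efin_qr _; rewrite size_rcons ltnW.
Qed.

Section Regular.
Hypothesis reg : regular A B.

Lemma regular_Einf_bound :
  exists K, forall v p, Einf v p -> Apath p = 1%N -> (size p <= K)%N.
Proof.
pose P (vw : 'I_N * 'I_N) n :=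
  forall p, Einf vw.1 p -> Apath p = 1%N -> psrc vw.1 p = vw.2 -> (size p <= n)%N.
have [n Pn] : exists n, forall vw, P vw n.
  apply: exists_bound_fin => [vw m n le_mn Pm p Einf_p Ap end_p|[v w] /=].
    by rewrite (leq_trans (Pm p Einf_p Ap end_p)).
  have [inf_w|fin_w] := classic (inf w); last first.
    by exists 0%N => p /Einf_psrc inf_end _ /= end_w; case: fin_w; rewrite -end_w.
  have [k nonunit] := nonunit_of_infinite inf_w; have [n reg_n] := reg v k.
  exists n => p Einf_p Ap /= end_w; rewrite leqNgt; apply/negP => /ltnW long_p.
  have := kact_mulA k Einf_p.1 (Einf_Bnz Einf_p); rewrite Ap mul1r => fixed.
  by apply: nonunit; have := reg_n p Einf_p.1; rewrite fixed end_w; apply.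
by exists n => v p Einf_p Ap; apply: (Pn (v, psrc v p)).
Qed.

Lemma regular_Efin_last_edge :
  exists K, forall v q e, Efin v (rcons q e) -> (K <= size q)%N -> Ae e = 1%N.
Proof.
pose Q v n := forall q e, Efin v (rcons q e) -> (n <= size q)%N -> Ae e = 1%N.
suff [n Qn] : exists n, forall v, Q v n by exists n => v; apply: Qn.
apply: exists_bound_fin => [v m n le_mn Qm q e Efin_qe le_nq|v].
  exact: Qm (leq_trans le_mn le_nq).
have [inf_v|fin_v] := classic (inf v); first by exists 0%N => q e [_ []].
have [S coverS] : exists S : seq int,
    forall k, exists2 l, l \in S & GB_eq A B (v, k) (v, l) by exact: NNPP fin_v.
pose P l n := forall p, path v p -> (ka l p).1 = p -> (n <= size p)%N ->
  GB_unit A B (psrc v p) (ka l p).2.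
have [n reg_n] : exists n, forall l, l \in S -> P l n.
  apply: exists_bound_seq => [l m n le_mn Pm p p_path fixed le_np|l _]; last exact: reg.
  exact: Pm p_path fixed (leq_trans le_mn le_np).
exists n => q [[i j] m] [qe_path [_ fin_qe]] size_q /=.
move: qe_path; rewrite -cats1 is_path_from_cat.
case/andP=> q_path /= /and3P[m_lt /eqP i_end _].
have /fin_qe[_ _ /eqP/B_neq0_eq1 Bij] : (i, j, m) \in rcons q (i, j, m).
  by rewrite mem_rcons mem_head.
have q_Bnz : all Bnz q.
  apply/allP => x xq; have /fin_qe[_ _ /eqP //] : x \in rcons q (i, j, m).
  by rewrite mem_rcons inE xq orbT.
apply/eqP; apply: contraT => Aij_neq1.
have [l lS [_ eq_l]] := coverS (Apath q)%:Z.
have fix_Aq : ka (Apath q)%:Z q = (q, 1).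
  by rewrite -[X in ka X]mulr1 (kact_mulA _ q_path).
have fix_l : (ka l q).1 = q by rewrite -eq_l // fix_Aq.
have [_ unit_l] := reg_n l lS q q_path fix_l size_q.
have e0_path : path (psrc v q) [:: (i, j, 0%N)] by rewrite /= -i_end eqxx andbT; lia.
have := eq_l (q ++ [:: (i, j, 0%N)]); rewrite is_path_from_cat q_path e0_path => /(_ isT).
rewrite !kact_cat fix_Aq fix_l (unit_l _ e0_path) (kact0 e0_path) /= Bij mul1r addr0.
by rewrite modz_small; [move=> /eqP; rewrite eqseq_cat // => /andP[_ /eqP[]] | lia].
Qed.

Lemma bounds_of_regular : exists K : nat,
  (forall v p, Einf v p -> Apath p = 1%N -> (size p <= K)%N) /\
  (forall v p, Efin v p -> (K <= size p)%N -> Apath (subpath_from K p) = 1%N).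
Proof.
have [K1 Einf_bound] := regular_Einf_bound.
have [K2 /Efin_drop_Apath1 Efin_drop] := regular_Efin_last_edge.
exists (maxn K1 K2.+1); split=> [v p Einf_p Ap | v p Efin_p size_p].
  by rewrite (leq_trans (Einf_bound _ _ Einf_p Ap)) ?leq_maxl.
apply: (Efin_drop v (take (maxn K1 K2.+1).-1 p)); first by rewrite cat_take_drop.
by rewrite size_takel; lia.
Qed.

End Regular.

End KatsuraAction.

Theorem corollary3p4 (N : nat) (A : 'M[nat]_N) (B : 'M[int]_N)
  (hKatsura : forall i j, A i j = 0%N -> B i j = 0)
  (hB01 : forall i j, B i j = 0 \/ B i j = 1) :
  (regular A B -> contracting A B) /\
  (regular A B <->
   exists K : nat,
     (forall (v : 'I_N) (p : seq (edge N)),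
        path_in_Einf A B v p -> Apath A p = 1%N -> (size p <= K)%N) /\
     (forall (v : 'I_N) (p : seq (edge N)),
        path_in_Efin A B v p -> (K <= size p)%N ->
        Apath A (subpath_from K p) = 1%N)).
Proof.
have regular_contracting : regular A B -> contracting A B.
  case/(bounds_of_regular hB01) => K [Einf_b Efin_b].
  exact: contracting_of_bounds Einf_b Efin_b.
split=> //; split; first exact: bounds_of_regular.
by case=> K [Einf_b Efin_b]; exact: regular_of_bounds Einf_b Efin_b.
Qed.
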